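(* Let $a,b\colon\mathbb N\to\mathbb Z\setminus\{0\}$ be injective sequences and let $c\colon\mathbb N\to[0,1/4]$ be any sequence. Then there exist a probability space $(X,\mathcal X,\mu)$, invertible measure preserving transformations $T,S\colon X\to X$, and $A\in\mathcal X$ such that $c(n)=\mu(T^{-a(n)}A\cap S^{-b(n)}A)$ for every $n\in\mathbb N$. *)

From HB Require Import structures.
From mathcomp Require Import all_boot all_order all_algebra.
From mathcomp Require Import all_classical all_reals all_analysis.
Set Implicit Arguments. Unset Strict Implicit. Unset Printing Implicit Defensive.
Import Order.TTheory GRing.Theory Num.Theory.
Local Open Scope classical_set_scope.
Local Open Scope ring_scope.

Definition zpow (X : Type) (T Tinv : X -> X) (z : int) : X -> X :=
  match z with
  | Posz n => iter n T
  | Negz n => iter n.+1 Tinv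
  end.

Definition invertible_mpt (d : measure_display) (X : measurableType d)
  (R : realType) (mu : set X -> \bar R) (T Tinv : X -> X) : Prop :=
  [/\ cancel T Tinv, cancel Tinv T,
      measurable_fun setT T, measurable_fun setT Tinv &
      forall B : set X, measurable B -> mu (T @^-1` B) = mu B].

From HB Require Import structures.
From mathcomp Require Import all_boot all_order all_algebra.
From mathcomp Require Import all_classical all_reals all_analysis.
From mathcomp Require Import zify ring lra.
Import Order.TTheory GRing.Theory Num.Theory numFieldNormedType.Exports.
Local Open Scope classical_set_scope.
Local Open Scope ring_scope.
Set Implicit Arguments. Unset Strict Implicit. Unset Printing Implicit Defensive.

(* Work on the coin-tossing space {0,1}^J over a countable set J of sites,
   realised as the law of the binary digits of a uniform point of [0, 1);
   every bijection of J then induces an invertible measure preserving map.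
   Expand 4 c(n) = \sum_(k in S_n) 2^-(k+1) in base 2.  The sites contain
   rows indexed by int; T shifts the rows, and S is a bijection of the sites
   such that S^-(b n) carries row 0 onto row -(a n), like T^-(a n), but
   composed with a permutation of positions that swaps the last two bits of
   every block k outside S_n.  A is the event that row 0 shows a marker at
   some block k; both preimages of A then detect their marker at the same k,
   and they hold together exactly when k is in S_n, an event of probability
   \sum_(k in S_n) 2^-(k+3) = c(n). *)

Section BitPatterns.
Local Open Scope nat_scope.

(* [fits k s m]: the k binary digits of m < 2 ^ k, most significant first and
   indexed from 0, take the value p.2 at position p.1 for every p in s. *)
Definition fits k (s : seq (nat * bool)) m : bool :=
  all (fun p => odd (m %/ 2 ^ (k - p.1.+1)) == p.2) s.

Definition count_fits k s : nat := \sum_(m < 2 ^ k) fits k s m.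

Definition free_bits (I : eqType) (i : I) (s : seq (I * bool)) : nat :=
  ((i, true) \notin s) + ((i, false) \notin s).

Lemma sum_ord_double (F : nat -> nat) n :
  \sum_(m < n.*2) F m = \sum_(m < n) (F m.*2 + F m.*2.+1).
Proof.
elim: n => [|n IHn]; first by rewrite !big_ord0.
by rewrite doubleS !big_ord_recr /= IHn addnA.
Qed.

Lemma fitsS k s m : all (fun p => p.1 < k.+1) s ->
  fits k.+1 s m = fits k [seq p <- s | p.1 < k] (m %/ 2) &&
                  all (fun p => (p.1 == k) ==> (odd m == p.2)) s.
Proof.
elim: s => [|p s IHs] //= /andP[pk sk].
rewrite IHs // {IHs}; case: ltnP => pk'.
  rewrite ltn_eqF //= (_ : k.+1 - p.1.+1 = (k - p.1.+1).+1); last first.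
    by rewrite subSS subnSK.
  by rewrite expnS divnMA; case: (_ == _); rewrite ?andbF.
have -> : p.1 = k by apply/eqP; rewrite eqn_leq pk'; rewrite ltnS in pk; rewrite pk.
rewrite eqxx subnn expn0 divn1 /=.
by case: (odd m == p.2); rewrite ?andbF //= andbC.
Qed.

Lemma free_bits_filter i k (s : seq (nat * bool)) :
  i < k -> free_bits i [seq p <- s | p.1 < k] = free_bits i s.
Proof. by move=> ik; rewrite /free_bits !mem_filter /= ik. Qed.

Lemma free_bitsE (I : eqType) (i : I) (s : seq (I * bool)) :
  free_bits i s = all (fun p => (p.1 == i) ==> (false == p.2)) s +
                  all (fun p => (p.1 == i) ==> (true == p.2)) s.
Proof.
have notin_all b : ((i, ~~ b) \notin s) = all (fun p => (p.1 == i) ==> (b == p.2)) s.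
  elim: s => //= [[j c] s IHs]; rewrite in_cons negb_or IHs xpair_eqE /= [i == j]eq_sym.
  by case: (j == i); case: c; move: IHs; case: b.
by rewrite /free_bits -(notin_all false) -(notin_all true).
Qed.

Lemma count_fits_prod k s : all (fun p => p.1 < k) s ->
  count_fits k s = \prod_(i < k) free_bits (i : nat) s.
Proof.
elim: k s => [|k IHk] s sk.
  by case: s sk => [|p s] // _; rewrite /count_fits big_ord0 expn0 big_ord1.
rewrite /count_fits expnS mul2n (sum_ord_double (fun m => nat_of_bool (fits k.+1 s m))).
rewrite big_ord_recr /=.
have -> : \prod_(i < k) free_bits (i : nat) s =
          \prod_(i < k) free_bits (i : nat) [seq p <- s | p.1 < k].
  by apply: eq_bigr => i _; rewrite free_bits_filter.
rewrite -IHk; last by apply/allP => p; rewrite mem_filter => /andP[].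
rewrite /count_fits big_distrl /=; apply: eq_bigr => m _.
rewrite !fitsS // !divn2 /= uphalf_double doubleK odd_double /= free_bitsE.
by case: fits; rewrite ?mul1n ?mul0n.
Qed.

End BitPatterns.

Lemma uniq_map_inj_in (T1 T2 : eqType) (f : T1 -> T2) (s : seq T1) :
  uniq (map f s) -> {in s &, injective f}.
Proof.
elim: s => [|x s IHs] //= /andP[fx_notin fs_uniq] p q; rewrite !in_cons.
case/orP => [/eqP ->|ps]; case/orP => [/eqP ->|qs] // fpq.
- by move: fx_notin; rewrite fpq map_f.
- by move: fx_notin; rewrite -fpq map_f.
- exact: IHs.
Qed.

Section CylinderWeight.
Variable R : realType.

(* The Lebesgue measure of the reals in [0, 1) whose binary digits satisfy the
   constraints s: each constrained position contributes the fraction of its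
   two possible bits that s allows. *)
Definition cylinder_weight (I : eqType) (s : seq (I * bool)) : R :=
  \prod_(i <- undup (map fst s)) ((free_bits i s)%:R / 2).

Lemma count_fits_weight k s : all (fun p => (p.1 < k)%N) s ->
  (count_fits k s)%:R / 2 ^+ k = cylinder_weight s.
Proof.
move=> sk; rewrite count_fits_prod // natr_prod.
have -> : (\prod_(i < k) (free_bits (i : nat) s)%:R) / (2 ^+ k : R) =
          \prod_(0 <= i < k) ((free_bits i s)%:R / 2).
  by rewrite big_split /= -exprVn prodr_const_nat subn0 big_mkord.
rewrite (bigID (fun i => i \in map fst s)) /= [X in _ * X]big1 ?mulr1; last first.
  move=> i /negP fresh_i.
  have notin_s b : (i, b) \in s = false.
    by apply/negP => ibs; apply: fresh_i; apply/mapP; exists (i, b).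
  by rewrite /free_bits !notin_s /= divff.
rewrite /cylinder_weight -big_filter; apply: perm_big; apply: uniq_perm.
- by rewrite filter_uniq // iota_uniq.
- exact: undup_uniq.
move=> i; rewrite mem_filter mem_undup mem_iota /= add0n.
case/boolP: (i \in map fst s) => //= /mapP [p ps ->].
by rewrite subn0 (allP sk p ps).
Qed.

Lemma cylinder_weight_map (I I' : eqType) (h : I -> I') (s : seq (I * bool)) :
  injective h -> cylinder_weight [seq (h p.1, p.2) | p <- s] = cylinder_weight s.
Proof.
move=> h_inj; have hb_inj : injective (fun p : I * bool => (h p.1, p.2)).
  by move=> [i b] [j c] /= [/h_inj -> ->].
rewrite /cylinder_weight -map_comp (_ : fst \o _ = h \o fst) // map_comp.
rewrite undup_map_inj // big_map; apply: eq_bigr => i _.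
by rewrite /free_bits (mem_map hb_inj s (i, true)) (mem_map hb_inj s (i, false)).
Qed.

Lemma cylinder_weight_uniq (I : eqType) (s : seq (I * bool)) :
  uniq (map fst s) -> cylinder_weight s = (2 ^+ size s)^-1.
Proof.
move=> s_uniq; rewrite /cylinder_weight undup_id // big_map.
rewrite (eq_big_seq (fun=> 2^-1)).
  by rewrite big_const_seq count_predT iter_mulr mulr1 exprVn.
move=> [i b] ibs /=.
have other_notin : (i, ~~ b) \notin s.
  apply/negP => ibs'; have /eqP := uniq_map_inj_in s_uniq ibs ibs' erefl.
  by rewrite xpair_eqE eqxx /=; case: (b).
by rewrite /free_bits; case: b ibs other_notin => /= -> ->; rewrite mul1r.
Qed.

End CylinderWeight.

Section BinaryDigits.
Variable R : realType.

Lemma truncn_divn (y : R) (n : nat) : 0 <= y -> (0 < n)%N ->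
  Num.truncn (y / n%:R) = (Num.truncn y %/ n)%N.
Proof.
move=> y0 n0; have n0' : 0 < (n%:R : R) by rewrite ltr0n.
have /andP[lo hi] := truncn_itv y0.
apply: truncn_def; apply/andP; split.
  by rewrite ler_pdivlMr // -natrM (le_trans _ lo) // ler_nat leq_divM.
by rewrite ltr_pdivrMr // (lt_le_trans hi) // -natrM ler_nat ltn_ceil.
Qed.

Definition bin_digit (i : nat) (r : R) : bool := odd (Num.truncn (r * 2 ^+ i.+1)).

Lemma bin_digitE r k i : 0 <= r -> (i < k)%N ->
  bin_digit i r = odd (Num.truncn (r * 2 ^+ k) %/ 2 ^ (k - i.+1)).
Proof.
move=> r0 ik; rewrite /bin_digit -truncn_divn ?expn_gt0 //; last first.
  by rewrite mulr_ge0 // exprn_ge0.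
congr (odd (Num.truncn _)); rewrite -mulrA; congr (_ * _).
by rewrite natrX -{1}(subnK ik) exprD mulrC mulKf.
Qed.

Lemma truncn_mul2S (t : R) n : 0 <= t ->
  Num.truncn (t * 2 ^+ n.+1) = ((Num.truncn (t * 2 ^+ n)).*2 + bin_digit n t)%N.
Proof.
move=> t0; rewrite /bin_digit.
have -> : Num.truncn (t * 2 ^+ n) = (Num.truncn (t * 2 ^+ n.+1) %/ 2)%N.
  rewrite -truncn_divn //; last by rewrite mulr_ge0 // exprn_ge0.
  by congr Num.truncn; rewrite exprS; field.
by rewrite -muln2 addnC -modn2 addnC -divn_eq.
Qed.

Lemma measurable_bin_digit i b : measurable [set r : R | bin_digit i r = b].
Proof.
have c0 : 0 < (2 ^+ i.+1 : R) by rewrite exprn_gt0.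
have truncn_le n : measurable [set r : R | (Num.truncn (r * 2 ^+ i.+1) <= n)%N].
  rewrite (_ : [set r | _] = `]-oo, n.+1%:R / 2 ^+ i.+1[%classic).
    exact: measurable_itv.
  by apply/seteqP; split => r /=; rewrite in_itv /= truncn_le_nat ltr_pdivlMr.
have truncn_lt n : measurable [set r : R | (Num.truncn (r * 2 ^+ i.+1) < n)%N].
  case: n => [|n]; last exact: truncn_le.
  by rewrite (_ : [set r | _] = set0) //; apply/seteqP; split.
rewrite (_ : [set r | _] = \bigcup_(n in [set n | odd n = b])
    ([set r | (Num.truncn (r * 2 ^+ i.+1) <= n)%N] `\`
     [set r | (Num.truncn (r * 2 ^+ i.+1) < n)%N])).
  by apply: bigcup_measurable => n _; apply: measurableD.
apply/seteqP; split => r /=.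
  by move=> <-; exists (Num.truncn (r * 2 ^+ i.+1)) => //=; rewrite leqnn ltnn.
by move=> [n <-] /= [le_n /negP]; rewrite -leqNgt => ge_n; rewrite /bin_digit;
  congr odd; apply/eqP; rewrite eqn_leq le_n ge_n.
Qed.

Definition digit_set (s : seq (nat * bool)) : set R :=
  [set r | all (fun p => bin_digit p.1 r == p.2) s].

Lemma measurable_digit_set s : measurable (digit_set s).
Proof.
elim: s => [|[i b] s IHs]; first by rewrite (_ : digit_set _ = setT) //; apply/seteqP.
rewrite (_ : digit_set _ = [set r | bin_digit i r = b] `&` digit_set s).
  exact: measurableI (measurable_bin_digit _ _) IHs.
apply/seteqP; split => r /=; first by case/andP => /eqP.
by move=> [ri rs]; rewrite /digit_set /= ri eqxx.
Qed.

Definition dyadic_itv k (m : nat) : set R :=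
  [set` `[m%:R / 2 ^+ k, m.+1%:R / 2 ^+ k[].

Lemma dyadic_itv_truncn k m r :
  dyadic_itv k m r -> 0 <= r /\ Num.truncn (r * 2 ^+ k) = m.
Proof.
rewrite /dyadic_itv /= in_itv /= => /andP[lo hi].
have k0 : 0 < (2 ^+ k : R) by rewrite exprn_gt0.
split; first by apply: le_trans lo; rewrite divr_ge0 ?ler0n ?exprn_ge0.
by apply: truncn_def; rewrite -ler_pdivrMr // -ltr_pdivlMr // lo hi.
Qed.

Lemma digit_set_dyadic k s : all (fun p => (p.1 < k)%N) s ->
  digit_set s `&` [set` `[0, 1[] =
  \big[setU/set0]_(m < 2 ^ k) (if fits k s m then dyadic_itv k m else set0).
Proof.
move=> sk; have k0 : 0 < (2 ^+ k : R) by rewrite exprn_gt0.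
rewrite -(bigcup_mkord _ (fun m => if fits k s m then dyadic_itv k m else set0)).
apply/seteqP; split => r.
- move=> [/= rs]; rewrite in_itv /= => /andP[r0 r1].
  have /andP[lo hi] := truncn_itv (mulr_ge0 r0 (ltW k0)).
  exists (Num.truncn (r * 2 ^+ k)).
    by rewrite /= truncn_lt_nat ?mulr_ge0 ?(ltW k0) // natrX gtr_pMl.
  have -> : fits k s (Num.truncn (r * 2 ^+ k)).
    apply/allP => p ps; have := allP rs p ps.
    by rewrite (bin_digitE r0 (allP sk p ps)).
  by rewrite /dyadic_itv /= in_itv /= ler_pdivrMr // ltr_pdivlMr // lo hi.
- move=> [m /= mk]; case: ifP => // m_fits /[dup] /dyadic_itv_truncn [r0 rm].
  rewrite /dyadic_itv /= in_itv /= => /andP[_ hi]; split.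
    apply/allP => p ps; rewrite (bin_digitE r0 (allP sk p ps)) rm.
    exact: (allP m_fits p ps).
  rewrite in_itv /= r0 /=; apply: (lt_le_trans hi).
  by rewrite ler_pdivrMr // mul1r -natrX ler_nat.
Qed.

Definition unit_lebesgue := mrestr (@lebesgue_measure R) (measurable_itv `[0, 1[).

HB.instance Definition _ := Measure.on unit_lebesgue.

Lemma unit_lebesgue_setT : unit_lebesgue setT = 1%E.
Proof.
by rewrite /unit_lebesgue /mrestr setTI lebesgue_measure_itv /= lte01 -EFinD subr0.
Qed.

HB.instance Definition _ :=
  Measure_isProbability.Build _ _ _ unit_lebesgue unit_lebesgue_setT.

Lemma unit_lebesgue_digit_set s :
  unit_lebesgue (digit_set s) = (cylinder_weight R s)%:E.
Proof.
pose k := \max_(p <- s) p.1.+1.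
have sk : all (fun p => (p.1 < k)%N) s.
  by apply/allP => p ps; exact: (@leq_bigmax_seq _ _ predT (fun q => q.1.+1) p ps).
have k0 : 0 < (2 ^+ k : R) by rewrite exprn_gt0.
rewrite /unit_lebesgue /mrestr -(count_fits_weight R sk) (digit_set_dyadic sk).
rewrite measure_semi_additive_ord.
- rewrite /count_fits natr_sum mulr_suml -sumEFin; apply: eq_bigr => m _.
  case: ifP => _; last by rewrite measure0 mul0r.
  apply: (eq_trans (lebesgue_measure_itv _)).
  rewrite /= lte_fin ltr_pM2r ?invr_gt0 // ltr_nat ltnSn.
  by rewrite -EFinD -mulrBl -natrB // subSnn.
- by move=> m; case: ifP => _ //; exact: measurable_itv.
- apply/trivIsetP => i j _ _ ij; apply/seteqP; split => // r [].
  case: ifP => _ // /dyadic_itv_truncn [_ ri].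
  case: ifP => _ // /dyadic_itv_truncn [_ rj].
  by move: ij; rewrite -val_eqE /= -ri -rj eqxx.
- by apply: bigsetU_measurable => m _; case: ifP => _ //; exact: measurable_itv.
Qed.

End BinaryDigits.

Section BinaryExpansion.
Variable R : realType.

Lemma eseries_eq_of_dyadic_approx (t : R) (S : set nat) (w : nat -> R) :
  (forall n, `|t - \sum_(0 <= k < n | k \in S) w k| <= (2 ^+ n)^-1) ->
  (\sum_(0 <= k <oo | k \in S) (w k)%:E = t%:E)%E.
Proof.
move=> approx; pose u n := \sum_(0 <= k < n | k \in S) w k.
have u_cvg : u @ \oo --> t.
  apply/cvgrPdist_le => e e0.
  have half_lt1 : `|(2 : R)^-1| < 1 by rewrite ger0_norm ?invr_ge0 // invf_lt1 // ltr1n.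
  move: (cvg_expr half_lt1) => /cvgrPdist_le /(_ e e0).
  apply: filterS => n; rewrite sub0r normrN exprVn => small.
  by apply: le_trans (approx n) _; rewrite (le_trans _ small) // ler_norm.
have -> : (fun n => \sum_(0 <= k < n | k \in S) (w k)%:E)%E = EFin \o u.
  by apply/funext => n; rewrite /= sumEFin.
by rewrite EFin_lim ?(cvg_lim _ u_cvg) //; apply/cvg_ex; exists t.
Qed.

Lemma sum_inv_pow2 n :
  \sum_(0 <= k < n | k \in [set: nat]) (2 ^+ k.+1 : R)^-1 = 1 - (2 ^+ n)^-1.
Proof.
elim: n => [|n IHn]; first by rewrite big_geq // expr0 invr1 subrr.
rewrite big_mkcond big_nat_recr //= -big_mkcond IHn in_setT exprS invfM.
by field; rewrite expf_neq0.
Qed.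

Lemma sum_bin_digits (t : R) n : 0 <= t < 1 ->
  \sum_(0 <= k < n | k \in [set k | bin_digit k t]) (2 ^+ k.+1 : R)^-1 =
  (Num.truncn (t * 2 ^+ n))%:R / 2 ^+ n.
Proof.
case/andP => t0 t1; elim: n => [|n IHn].
  by rewrite big_geq // expr0 mulr1 divr1 (@truncn_def _ t 0) // t0.
rewrite big_mkcond big_nat_recr //= -big_mkcond IHn truncn_mul2S // natrD.
rewrite -muln2 natrM exprS.
have pow2_neq0 : (2 ^+ n : R) != 0 by rewrite expf_neq0.
case: (boolP (bin_digit n t)) => d; first by rewrite mem_set //=; field.
by rewrite memNset /=; [field|exact/negP].
Qed.

Lemma binary_expansion (t : R) : 0 <= t <= 1 ->
  exists S : set nat, (\sum_(0 <= k <oo | k \in S) ((2 ^+ k.+1 : R)^-1)%:E = t%:E)%E.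
Proof.
case/andP => t0; rewrite le_eqVlt => /orP[/eqP ->|t1].
  exists setT; apply: eseries_eq_of_dyadic_approx => n.
  by rewrite sum_inv_pow2 opprB addrC subrK ger0_norm // invr_ge0 exprn_ge0.
exists [set k | bin_digit k t]; apply: eseries_eq_of_dyadic_approx => n.
have pow2_gt0 : (0 : R) < 2 ^+ n by rewrite exprn_gt0.
have /andP[lo hi] := truncn_itv (mulr_ge0 t0 (ltW pow2_gt0)).
rewrite sum_bin_digits ?t0 // ger0_norm; last by rewrite subr_ge0 ler_pdivrMr.
rewrite lerBlDl -[X in _ + X]div1r -mulrDl ler_pdivlMr // natr1.
exact: ltW.
Qed.

End BinaryExpansion.

Section CoinTossing.
Variables (R : realType) (J : countType).

Definition cylinder (s : seq (J * bool)) : set (J -> bool) :=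
  [set x | all (fun p => x p.1 == p.2) s].

Definition coins := g_sigma_algebraType (range cylinder).

Lemma cylinder_measurable s : measurable (cylinder s : set coins).
Proof. by apply: sub_sigma_algebra; exists s. Qed.

Lemma setI_closed_cylinder : setI_closed (range cylinder).
Proof.
move=> _ _ [s _ <-] [t _ <-]; exists (s ++ t) => //.
by apply/seteqP; split => x; rewrite /cylinder /= all_cat => /andP.
Qed.

Definition digits_of (r : measurableTypeR R) : coins :=
  fun j => bin_digit (pickle j) r.

Lemma preimage_digits_of_cylinder s :
  digits_of @^-1` cylinder s = digit_set [seq (pickle p.1, p.2) | p <- s].
Proof. by apply/seteqP; split => r; rewrite /digit_set /= all_map. Qed.

Lemma measurable_digits_of : measurable_fun setT digits_of.
Proof.
apply: (@measurability _ _ _ _ setT digits_of (range cylinder)) => //.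
move=> _ [_ [s _ <-] <-]; rewrite setTI preimage_digits_of_cylinder.
exact: measurable_digit_set.
Qed.

HB.instance Definition _ :=
  isMeasurableFun.Build _ _ _ _ digits_of measurable_digits_of.

Definition coin_measure : probability coins R :=
  distribution (@unit_lebesgue R) digits_of.

Lemma coin_measure_cylinder s : coin_measure (cylinder s) = (cylinder_weight R s)%:E.
Proof.
rewrite /coin_measure /distribution /pushforward /= preimage_digits_of_cylinder.
by rewrite unit_lebesgue_digit_set cylinder_weight_map //; exact: pcan_inj pickleK.
Qed.

End CoinTossing.

Section Relabel.
Variables (R : realType) (J : countType).

Definition relabel (f : J -> J) (x : coins J) : coins J := fun j => x (f j).

Lemma preimage_relabel_cylinder f s :
  relabel f @^-1` cylinder s = cylinder [seq (f p.1, p.2) | p <- s].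
Proof. by apply/seteqP; split => x; rewrite /cylinder /= all_map. Qed.

Lemma measurable_relabel f : measurable_fun setT (relabel f).
Proof.
apply: (@measurability _ _ _ _ setT (relabel f) (range (@cylinder J))) => //.
move=> _ [_ [s _ <-] <-]; rewrite setTI preimage_relabel_cylinder.
exact: cylinder_measurable.
Qed.

HB.instance Definition _ f :=
  isMeasurableFun.Build _ _ _ _ (relabel f) (measurable_relabel f).

Lemma coin_measure_relabel f A : injective f -> measurable A ->
  coin_measure R J (relabel f @^-1` A) = coin_measure R J A.
Proof.
move=> f_inj mA.
apply: (@measure_unique _ R (coins J) (range (@cylinder J)) (fun=> setT) erefl
  _ _ _ (distribution (coin_measure R J) (relabel f))) => //.
- exact: setI_closed_cylinder.
- by move=> _; exists [::] => //; apply/seteqP.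
- by rewrite bigcup_const.
- move=> _ [s _ <-].
  change (coin_measure R J (relabel f @^-1` cylinder s) =
          coin_measure R J (cylinder s)).
  by rewrite preimage_relabel_cylinder !coin_measure_cylinder cylinder_weight_map.
- move=> _; change (coin_measure R J (relabel f @^-1` setT) < +oo)%E.
  by rewrite preimage_setT probability_setT ltry.
Qed.

Lemma invertible_mpt_relabel f g : cancel f g -> cancel g f ->
  invertible_mpt (coin_measure R J) (relabel f) (relabel g).
Proof.
move=> fK gK; split; [| |exact: measurable_relabel|exact: measurable_relabel|].
- by move=> x; apply/funext => j; rewrite /relabel gK.
- by move=> x; apply/funext => j; rewrite /relabel fK.
- by move=> B mB; apply: coin_measure_relabel => //; exact: can_inj fK.
Qed.

Lemma zpow_relabel f g z (x : coins J) j :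
  zpow (relabel f) (relabel g) z x j = x (zpow f g z j).
Proof.
have iter_relabel h n (y : coins J) i : iter n (relabel h) y i = y (iter n h i).
  by elim: n i => [|n IHn] i //=; rewrite /relabel IHn -iterSr iterS.
by case: z => n; apply: iter_relabel.
Qed.

End Relabel.

Section ShiftAlong.
Variables (Y : choiceType) (X : Type) (e : int * Y -> X).
Hypothesis e_inj : injective e.

Definition shift_along (k : int) (x : X) : X :=
  if pselect (exists p, x = e p) is left ex then
    let p := projT1 (cid ex) in e (p.1 + k, p.2)
  else x.

Lemma shift_alongE k p : shift_along k (e p) = e (p.1 + k, p.2).
Proof.
rewrite /shift_along; case: pselect => [ex|[]]; last by exists p.
by case: cid => q /= /e_inj ->.
Qed.

Lemma shift_alongK k : cancel (shift_along k) (shift_along (- k)).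
Proof.
move=> x; case: (pselect (exists p, x = e p)) => [[p ->]|no_ex].
  by rewrite !shift_alongE /= -addrA subrr addr0 -surjective_pairing.
have fixed k' : shift_along k' x = x.
  by rewrite /shift_along; case: pselect => // -[p xp]; case: no_ex; exists p.
by rewrite !fixed.
Qed.

Lemma shift_alongVK k : cancel (shift_along (- k)) (shift_along k).
Proof. by rewrite -{2}(opprK k); exact: shift_alongK. Qed.

Lemma zpow_shift_along z y :
  zpow (shift_along 1) (shift_along (-1)) z (e (0, y)) = e (z, y).
Proof.
case: z => n /=.
  by elim: n => [|n IHn] //=; rewrite IHn shift_alongE /= -addn1 PoszD.
elim: n => [|n IHn] /=; first by rewrite shift_alongE /= add0r.
by rewrite IHn shift_alongE /=; congr (e (_, y)); rewrite !NegzE; lia.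
Qed.

End ShiftAlong.

Section BlockMarkers.
Local Open Scope nat_scope.

(* Positions are grouped in blocks {3k, 3k+1, 3k+2}; the swap exchanges 3k+1
   and 3k+2 exactly in the blocks k outside S. *)
Definition block_swap (S : set nat) (q : nat) : nat :=
  if (q %% 3 == 0) || `[< S (q %/ 3) >] then q
  else if q %% 3 == 1 then q.+1 else q.-1.

Lemma block_swapK S : involutive (block_swap S).
Proof.
move=> q; have [fixed|moved] := boolP ((q %% 3 == 0) || `[< S (q %/ 3) >]).
  have fixq : block_swap S q = q by rewrite /block_swap fixed.
  by rewrite !fixq.
move: (moved) => /norP[q0 /negbTE qS].
rewrite {2}/block_swap (negbTE moved); case: ifP => q1; rewrite /block_swap.
  have -> : (q.+1 %% 3 == 0) = false by lia.
  have -> : q.+1 %/ 3 = q %/ 3 by lia.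
  have -> : (q.+1 %% 3 == 1) = false by lia.
  by rewrite qS.
have -> : (q.-1 %% 3 == 0) = false by lia.
have -> : q.-1 %/ 3 = q %/ 3 by lia.
have -> : (q.-1 %% 3 == 1) = true by lia.
by rewrite qS /=; lia.
Qed.

Lemma block_swap_mul3 S i : block_swap S (3 * i) = 3 * i.
Proof. by rewrite /block_swap (_ : 3 * i %% 3 == 0) //; lia. Qed.

Lemma block_swap_in S k : S k ->
  block_swap S (3 * k).+1 = (3 * k).+1 /\ block_swap S (3 * k).+2 = (3 * k).+2.
Proof.
move=> Sk; rewrite /block_swap.
have -> : (3 * k).+1 %/ 3 = k by lia.
have -> : (3 * k).+2 %/ 3 = k by lia.
by rewrite asboolT // !orbT.
Qed.

Lemma block_swap_out S k : ~ S k -> block_swap S (3 * k).+1 = (3 * k).+2.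
Proof.
move=> Sk; rewrite /block_swap.
have -> : (3 * k).+1 %/ 3 = k by lia.
have -> : ((3 * k).+1 %% 3 == 0) = false by lia.
have -> : ((3 * k).+1 %% 3 == 1) = true by lia.
by rewrite asboolF.
Qed.

(* [marked k u]: the first block whose first bit is set is block k, and that
   block reads 1 1 0.  It has probability 2 ^- (k + 3). *)
Definition marker (k : nat) : seq (nat * bool) :=
  [seq (3 * i, false) | i <- iota 0 k] ++
  [:: (3 * k, true); ((3 * k).+1, true); ((3 * k).+2, false)].

Definition marked k (u : nat -> bool) : bool := all (fun p => u p.1 == p.2) (marker k).

Lemma marker_uniq k : uniq (map fst (marker k)).
Proof.
rewrite map_cat cat_uniq -map_comp; apply/and3P; split.
- by rewrite map_inj_uniq ?iota_uniq // => i j /= /eqP; rewrite eqn_mul2l => /eqP.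
- apply/hasPn => q /=; rewrite !in_cons in_nil orbF => /or3P[] /eqP ->;
  apply/mapP => -[i]; rewrite mem_iota add0n /= => ik; lia.
- by rewrite /= !in_cons !in_nil; apply/and3P; split => //; lia.
Qed.

Lemma size_marker k : size (marker k) = k + 3.
Proof. by rewrite size_cat size_map size_iota. Qed.

Lemma markedE k u : marked k u =
  [&& all (fun i => ~~ u (3 * i)) (iota 0 k),
      u (3 * k), u (3 * k).+1 & ~~ u (3 * k).+2].
Proof.
rewrite /marked all_cat all_map /= andbT; congr (_ && _).
  by apply: eq_all => i /=; case: (u _).
by case: (u _); case: (u _); case: (u _).
Qed.

Lemma marked_unique k k' u v : marked k u -> marked k' v ->
  (forall i, u (3 * i) = v (3 * i)) -> k = k'.
Proof.
have first_set k1 w : marked k1 w -> (forall i, i < k1 -> ~~ w (3 * i)) /\ w (3 * k1).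
  by rewrite markedE => /and4P[/allP before at_k _ _]; split => // i ik;
    apply: before; rewrite mem_iota.
move=> /first_set [u_before u_at] /first_set [v_before v_at] uv.
case: (ltngtP k k') => // kk'.
  by move: (v_before _ kk'); rewrite -uv u_at.
by move: (u_before _ kk'); rewrite uv v_at.
Qed.

(* Block swaps fix the positions 3i, so u and u \o block_swap S are marked at
   the same block k, and the swap destroys the pattern 1 0 exactly when k is
   not in S. *)
Lemma marked_block_swap (S : set nat) (u : nat -> bool) :
  (exists k, marked k u) /\ (exists k, marked k (u \o block_swap S)) <->
  exists2 k, S k & marked k u.
Proof.
split.
  move=> [[k uk] [k' uk']].
  have kk' : k = k' by apply: (marked_unique uk uk') => i /=; rewrite block_swap_mul3.
  subst k'; exists k => //; apply/not_notP => Sk.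
  move: uk uk'; rewrite !markedE /= (block_swap_out Sk).
  by move=> /and4P[_ _ _ /negbTE ->] /and4P[].
move=> [k Sk uk]; split; exists k => //; have [swap1 swap2] := block_swap_in Sk.
move: uk; rewrite !markedE /= swap1 swap2 block_swap_mul3 => /and4P[before -> -> ->].
by rewrite !andbT; apply: sub_all before => i; rewrite block_swap_mul3.
Qed.

End BlockMarkers.

(* The site (m, q, true) is position q of row m; the sites (m, q, false) are
   spare coordinates used only to complete the orbits of the second shift. *)
Definition site := (int * nat * bool)%type.

Definition row_site (p : int * nat) : site := (p.1, p.2, true).

Lemma row_site_inj : injective row_site.
Proof. by move=> [m q] [m' q'] [-> ->]. Qed.

Lemma zpow_row_shift z q :
  zpow (shift_along row_site 1) (shift_along row_site (-1)) z (0, q, true) =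
  (z, q, true).
Proof. exact: (zpow_shift_along row_site_inj z q). Qed.

Definition lift_row (m : int) (s : seq (nat * bool)) : seq (site * bool) :=
  [seq ((m, p.1, true), p.2) | p <- s].

Lemma cylinder_lift_row m s (x : coins site) :
  cylinder (lift_row m s) x = all (fun p => x (m, p.1, true) == p.2) s.
Proof. by rewrite /cylinder /lift_row /= all_map. Qed.

Definition marker_event : set (coins site) :=
  \bigcup_k cylinder (lift_row 0 (marker k)).

Lemma marker_eventE (x : coins site) :
  marker_event x <-> exists k, marked k (fun q => x (0, q, true)).
Proof.
split; first by move=> [k _]; rewrite cylinder_lift_row; exists k.
by move=> [k xk]; exists k => //; rewrite cylinder_lift_row.
Qed.

Section Coupling.
Variables (a b : nat -> int) (S : nat -> set nat).
Hypotheses (a_inj : injective a) (b_inj : injective b).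
Hypotheses (a_nz : forall n, a n != 0) (b_nz : forall n, b n != 0).

Definition b_index (m : int) : nat := xget 0%N (fun n => m = - b n).

Lemma b_indexP m : (exists n, m = - b n) -> m = - b (b_index m).
Proof. by move=> ex; exact: (xgetPex 0%N ex). Qed.

Lemma b_indexE n : b_index (- b n) = n.
Proof. by apply: xget_unique => // m /oppr_inj /b_inj. Qed.

(* Row 0 stays in place, row - b n is sent onto row - a n through the block
   swap of S n, and all other rows are parked on spare sites. *)
Definition coupling (p : int * nat) : site :=
  if p.1 == 0 then (0, p.2, true)
  else if `[< exists n, p.1 = - b n >] then
    (- a (b_index p.1), block_swap (S (b_index p.1)) p.2, true)
  else (p.1, p.2, false).

Lemma coupling_inj : injective coupling.
Proof.
have a_row0 n : (- a n == 0) = false by rewrite oppr_eq0 (negbTE (a_nz n)).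
move=> [m q] [m' q']; rewrite /coupling /=.
case: (eqVneq m 0) => [->|m0]; case: (eqVneq m' 0) => [->|m'0] //=.
- by case=> ->.
- by case: ifP => _ // [] /esym/eqP; rewrite a_row0.
- by case: ifP => _ // [] /eqP; rewrite a_row0.
case: ifP => /asboolP bm; case: ifP => /asboolP bm' //; last by case=> -> ->.
case=> /oppr_inj /a_inj same_index /(congr1 (block_swap (S (b_index m')))).
rewrite -same_index !block_swapK => ->.
by rewrite (b_indexP bm) (b_indexP bm') same_index.
Qed.

Lemma zpow_coupling_shift n q :
  zpow (shift_along coupling 1) (shift_along coupling (-1)) (- b n) (0, q, true) =
  (- a n, block_swap (S n) q, true).
Proof.
have -> : (0, q, true) = coupling (0, q) by rewrite /coupling eqxx.
rewrite (zpow_shift_along coupling_inj) /coupling /= oppr_eq0 (negbTE (b_nz n)).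
by rewrite asboolT ?b_indexE //; exists n.
Qed.

Lemma preimage_marker_event n :
  zpow (relabel (shift_along row_site 1)) (relabel (shift_along row_site (-1))) (- a n)
    @^-1` marker_event `&`
  zpow (relabel (shift_along coupling 1))
       (relabel (shift_along coupling (-1))) (- b n) @^-1` marker_event =
  \bigcup_(k in S n) cylinder (lift_row (- a n) (marker k)).
Proof.
have row_view (x : coins site) :
    (fun q => zpow (relabel (shift_along row_site 1))
       (relabel (shift_along row_site (-1))) (- a n) x (0, q, true)) =
    (fun q => x (- a n, q, true)).
  by apply/funext => q; rewrite zpow_relabel zpow_row_shift.
have coupled_view (x : coins site) :
    (fun q => zpow (relabel (shift_along coupling 1))
       (relabel (shift_along coupling (-1))) (- b n) x (0, q, true)) =
    (fun q => x (- a n, q, true)) \o block_swap (S n).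
  by apply/funext => q; rewrite zpow_relabel zpow_coupling_shift.
apply/seteqP; split => x.
- move=> [/marker_eventE Tx /marker_eventE Sx].
  rewrite row_view in Tx; rewrite coupled_view in Sx.
  have [k Sk xk] := proj1 (marked_block_swap _ _) (conj Tx Sx).
  by exists k => //; rewrite cylinder_lift_row.
- move=> [k Sk]; rewrite cylinder_lift_row => xk.
  have [Tx Sx] := proj2 (marked_block_swap (S n) (fun q => x (- a n, q, true)))
    (ex_intro2 _ _ k Sk xk).
  by split; apply/marker_eventE; rewrite ?row_view ?coupled_view.
Qed.

End Coupling.

Lemma coin_measure_marked_rows (R : realType) (m : int) (K : set nat) :
  coin_measure R site (\bigcup_(k in K) cylinder (lift_row m (marker k))) =
  (4^-1%:E * \sum_(0 <= k <oo | k \in K) ((2 ^+ k.+1 : R)^-1)%:E)%E.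
Proof.
rewrite measure_bigcup //; last first.
- move=> i j _ _ [x []]; rewrite !cylinder_lift_row => xi xj.
  have := @marked_unique i j (fun q => x (m, q, true)) (fun q => x (m, q, true)).
  by apply.
- by move=> k _; exact: cylinder_measurable.
rewrite -nneseriesZl; last by move=> k _; rewrite lee_fin invr_ge0 exprn_ge0.
apply: eq_eseriesr => k _; apply: (eq_trans (coin_measure_cylinder _ _)).
rewrite cylinder_weight_uniq; last first.
  rewrite /lift_row -map_comp (_ : _ \o _ = (fun q => (m, q, true)) \o fst) //.
  by rewrite map_comp map_inj_uniq ?marker_uniq // => i j [].
rewrite size_map size_marker -EFinM addn3 !exprS !invfM; congr EFin.
by field; rewrite expf_neq0.
Qed.

Theorem corollary4p2 (R : realType) (a b : nat -> int) (c : nat -> R)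
  (a_inj : injective a) (b_inj : injective b)
  (a_nz : forall n, a n != 0) (b_nz : forall n, b n != 0)
  (c_range : forall n, 0 <= c n <= 1 / 4) :
  exists (d : measure_display) (X : measurableType d) (mu : probability X R)
         (T Tinv S Sinv : X -> X) (A : set X),
    [/\ invertible_mpt mu T Tinv, invertible_mpt mu S Sinv, measurable A &
        forall n : nat,
          (c n)%:E = mu ((zpow T Tinv (- a n)) @^-1` A
                         `&` (zpow S Sinv (- b n)) @^-1` A)].
Proof.
have expansion n : exists S : set nat,
    (\sum_(0 <= k <oo | k \in S) ((2 ^+ k.+1 : R)^-1)%:E = (4 * c n)%:E)%E.
  by apply: binary_expansion; have /andP[c0 c1] := c_range n; apply/andP; split; lra.
have [S HS] := choice expansion.
exists _, (coins site), (coin_measure R site).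
exists (relabel (shift_along row_site 1)), (relabel (shift_along row_site (-1))).
exists (relabel (shift_along (coupling a b S) 1)).
exists (relabel (shift_along (coupling a b S) (-1))), marker_event.
split.
- by apply: invertible_mpt_relabel;
    [exact: (shift_alongK row_site_inj)|exact: (shift_alongVK row_site_inj)].
- have coupling_inj : injective (coupling a b S) by exact: coupling_inj.
  by apply: invertible_mpt_relabel;
    [exact: (shift_alongK coupling_inj)|exact: (shift_alongVK coupling_inj)].
- by apply: bigcupT_measurable => k; exact: cylinder_measurable.
move=> n; rewrite preimage_marker_event // coin_measure_marked_rows HS -EFinM.
by rewrite mulrA mulVf // mul1r.
Qed.
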